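(* Let $q\ge 4$ and $t\ge 1$ be integers and let $M$ be a matroid with $\epsilon(M)\ge \frac{q^{r(M)}-1}{q-1}$ and $r(M)\ge 3t$. If $M$ is not round, then either $M$ has a $U_{2,q^2+2}$-minor or there is a round restriction $N$ of $M$ such that $r(N)\ge t$ and $\epsilon(N)>\frac{q^{r(N)}-1}{q-1}$.
   Context: A matroid $M$ is round if $E(M)$ cannot be partitioned into two sets each of rank less than $r(M)$. A point is a rank-$1$ flat and $\epsilon(M)$ is the number of points of $M$. $U_{2,m}$ is the uniform matroid of rank $2$ on $m$ elements. *)

From mathcomp Require Import all_boot.
Set Implicit Arguments. Unset Strict Implicit. Unset Printing Implicit Defensive.

Section Matroids.
Variable T : finType.

(* (E, r) is a matroid with ground set E and rank function r (only the
   values of r on subsets of E matter). Standard rank axioms R1-R3. *)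
Definition is_matroid (E : {set T}) (r : {set T} -> nat) : Prop :=
  [/\ forall X : {set T}, X \subset E -> r X <= #|X|,
      forall X Y : {set T}, X \subset Y -> Y \subset E -> r X <= r Y &
      forall X Y : {set T}, X \subset E -> Y \subset E ->
        r (X :|: Y) + r (X :&: Y) <= r X + r Y].

Definition mrank (E : {set T}) (r : {set T} -> nat) : nat := r E.

Definition is_flat (E : {set T}) (r : {set T} -> nat) (X : {set T}) : bool :=
  (X \subset E) && [forall e in E :\: X, r X < r (e |: X)].

Definition eps (E : {set T}) (r : {set T} -> nat) : nat :=
  #|[set X : {set T} | is_flat E r X && (r X == 1)]|.

Definition round (E : {set T}) (r : {set T} -> nat) : Prop :=
  ~ exists X Y : {set T},
      [/\ X :|: Y = E, X :&: Y = set0, r X < r E & r Y < r E].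

(* the minor M / C \ D (C, D disjoint subsets of E):
   ground set E - (C u D), rank X |-> r(X u C) - r(C) *)
Definition minor_ground (E C D : {set T}) : {set T} := E :\: (C :|: D).
Definition minor_rank (r : {set T} -> nat) (C : {set T}) : {set T} -> nat :=
  fun X => r (X :|: C) - r C.

Definition is_U2 (m : nat) (E' : {set T}) (r' : {set T} -> nat) : Prop :=
  #|E'| = m /\ forall X : {set T}, X \subset E' -> r' X = minn #|X| 2.

Definition has_U2_minor (m : nat) (E : {set T}) (r : {set T} -> nat) : Prop :=
  exists C D : {set T},
    [/\ C \subset E, D \subset E, [disjoint C & D] &
        is_U2 m (minor_ground E C D) (minor_rank r C)].

End Matroids.

(* Kung's bound: without a U_{2,l+2}-minor a matroid of rank k has at most
   1 + l + ... + l^(k-1) points, since the lines through a point e correspond to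
   the points of M/e and each of them carries at most l points besides e.
   Suppose M has no U_{2,q^2+2}-minor and no round restriction N with r(N) >= t
   has eps(N) > (q^r(N) - 1)/(q - 1). A non-round restriction splits into two
   parts of smaller rank, and eps is subadditive over such a split. Induction on
   rank then gives eps(N)(q - 1) <= q^r(N) - 1 + 2^(r(N)-t+1) K (q - 1) for every
   restriction N, where K is Kung's bound for l = q^2 in rank t - 1 (it covers
   the restrictions of rank < t). Splitting M itself once, the bound drops below
   q^r(M) - 1 as soon as r(M) >= 3t, contradicting the density of M. *)

From mathcomp Require Import all_boot zify.
From Stdlib Require Import Classical.
Set Implicit Arguments. Unset Strict Implicit. Unset Printing Implicit Defensive.

Fixpoint geo_sum (l k : nat) : nat := if k is k'.+1 then 1 + l * geo_sum l k' else 0.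

Lemma geo_sum_mono l : {homo geo_sum l : a b / a <= b}.
Proof.
apply: homo_leq => [//|a b c|k]; first exact: leq_trans.
elim: k => [|k IH] //=; rewrite leq_add2l; exact: leq_mul.
Qed.

Lemma geo_sumE l k : 1 <= l -> geo_sum l k * (l - 1) + 1 = l ^ k.
Proof. by move=> l1; elim: k => [|k IH] //=; rewrite expnS -IH; nia. Qed.

Definition density_bound (q t K n : nat) :=
  q ^ n - 1 + 2 ^ (n - (t - 1)) * K * (q - 1).

Lemma density_bound_mono q t K : 0 < q -> {homo density_bound q t K : a b / a <= b}.
Proof.
move=> q0 a b ab; apply: leq_add; first exact: leq_sub2r (leq_pexp2l q0 ab).
by rewrite !leq_mul // leq_pexp2l // leq_sub2r.
Qed.

Lemma density_bound_double q t K m : 2 <= q -> t - 1 <= m ->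
  2 * density_bound q t K m <= density_bound q t K m.+1.
Proof.
move=> q2 tm; rewrite /density_bound (subSn tm) !expnS.
have : 1 <= q ^ m by rewrite expn_gt0 (ltnW q2).
have : 2 * q ^ m <= q * q ^ m by rewrite leq_mul2r q2 orbT.
nia.
Qed.

Lemma density_bound_lt q t m : 4 <= q -> 1 <= t -> 3 * t <= m.+1 ->
  2 * density_bound q t (geo_sum (q ^ 2) (t - 1)) m < q ^ m.+1 - 1.
Proof.
move=> q4 t1 tm; set a := t - 1; set K := geo_sum (q ^ 2) a.
have K_lt : K * (q ^ 2 - 1) < q ^ (2 * a).
  by rewrite expnM -(geo_sumE a (_ : 1 <= q ^ 2)) ?expn_gt0 ?(leq_trans _ q4); lia.
have pow2_le : 2 ^ (m - a).+1 <= q ^ (m - 2 * a).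
  rewrite (@leq_trans (4 ^ (m - 2 * a))) //.
    by rewrite (_ : 4 = 2 ^ 2) // -expnM leq_exp2l //; lia.
  by rewrite leq_exp2r // subn_gt0; lia.
have tail_lt : 2 ^ (m - a).+1 * K * (q - 1) < q ^ m.
  have -> : q ^ m = q ^ (m - 2 * a) * q ^ (2 * a) by rewrite -expnD; congr (_ ^ _); lia.
  have : 2 ^ (m - a).+1 * (K * (q ^ 2 - 1)) < q ^ (m - 2 * a) * q ^ (2 * a).
    apply: leq_ltn_trans (leq_mul pow2_le (leqnn _)) _.
    by rewrite ltn_pmul2l ?expn_gt0 ?(leq_trans _ q4).
  have : q - 1 <= q ^ 2 - 1.
    by rewrite leq_sub2r // (expnS q 1) expn1 leq_pmulr // (leq_trans _ q4).
  nia.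
have : 1 <= q ^ m by rewrite expn_gt0 (leq_trans _ q4).
have : 4 * q ^ m <= q * q ^ m by rewrite leq_mul2r q4 orbT.
rewrite /density_bound -/a -/K expnS.
move: tail_lt; rewrite expnS; nia.
Qed.

Lemma setU1_ind (T : finType) (P : {set T} -> Prop) :
  P set0 -> (forall (x : T) (A : {set T}), x \notin A -> P A -> P (x |: A)) ->
  forall A, P A.
Proof.
move=> P0 PU A; have [n] := ubnP #|A|; elim: n A => // n IH A ltA.
have [->|[x xA]] := set_0Vmem A; first exact: P0.
rewrite -(setD1K xA); apply: PU; first by rewrite !inE eqxx.
by apply: IH; rewrite (cardsD1 x A) xA in ltA.
Qed.

Lemma card_bigcup_le (I T : finType) (P : pred I) (F : I -> {set T}) :
  #|\bigcup_(i | P i) F i| <= \sum_(i | P i) #|F i|.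
Proof.
apply: (big_ind2 (fun (A : {set T}) n => #|A| <= n)) => [|A m B n leA leB|//].
  by rewrite cards0.
exact: leq_trans (leq_card_setU A B) (leq_add leA leB).
Qed.

Lemma exists_subset_card (T : finType) (A : {set T}) m :
  m <= #|A| -> exists2 B : {set T}, B \subset A & #|B| = m.
Proof.
case/card_geqP=> s [uniq_s size_s sA]; exists [set x in s].
  by apply/subsetP=> x; rewrite inE => /sA.
by rewrite cardsE -size_s; apply/card_uniqP.
Qed.

Lemma exists_dominating_independent (T : finType) (p : rel T) (A : {set T}) :
  symmetric p -> exists R : {set T}, [/\ R \subset A,
    {in R &, forall x y, x != y -> ~~ p x y} &
    {in A, forall x, x \in R \/ exists2 g, g \in R & p x g}].
Proof.
move=> p_sym.
pose indep := [pred R : {set T} | (R \subset A) &&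
  [forall x in R, forall y in R, (x != y) ==> ~~ p x y]].
have indep0 : indep set0 by rewrite /= sub0set; apply/forall_inP => x; rewrite inE.
have [R /maxsetP[/andP[RA /forall_inP indR] maxR] _] := maxset_exists indep0.
exists R; split=> [//|x y xR yR|x xA].
  by have /forall_inP/(_ y yR)/implyP := indR x xR.
have [xR|xNR] := boolP (x \in R); [by left | right].
apply/exists_inP; apply: contraNT xNR; rewrite negb_exists_in => /forall_inP nxR.
suff <- : x |: R = R by rewrite setU11.
apply: maxR (subsetUr _ _); rewrite /= subUset sub1set xA RA /=.
apply/forall_inP => y /setU1P[->|yR];
  apply/forall_inP => z /setU1P[->|zR]; apply/implyP => //.
- by rewrite eqxx.
- by move=> _; apply: nxR.
- by move=> _; rewrite p_sym; apply: nxR.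
- by have /forall_inP/(_ z zR)/implyP := indR y yR.
Qed.

Section Matroid.
Variables (T : finType) (E : {set T}) (r : {set T} -> nat).
Hypothesis HM : is_matroid E r.
Implicit Types (A B C F L N P Q R S W X Y Z : {set T}) (x y e f g : T).

Lemma rank_le_card X : X \subset E -> r X <= #|X|.
Proof. by case: HM => H _ _; apply: H. Qed.

Lemma rankS X Y : X \subset Y -> Y \subset E -> r X <= r Y.
Proof. by case: HM => _ H _; apply: H. Qed.

Lemma rank_submod X Y : X \subset E -> Y \subset E ->
  r (X :|: Y) + r (X :&: Y) <= r X + r Y.
Proof. by case: HM => _ _ H; apply: H. Qed.

Lemma rank0 : r set0 = 0.
Proof. by apply/eqP; rewrite -leqn0 -(cards0 T) rank_le_card ?sub0set. Qed.

Lemma rankU_le X A : X \subset E -> A \subset E -> r (X :|: A) <= #|X| + r A.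
Proof. by move=> XE AE; have := rank_submod XE AE; have := rank_le_card XE; lia. Qed.

Lemma rankU1_le x A : x \in E -> A \subset E -> r (x |: A) <= (r A).+1.
Proof. by move=> xE AE; have := @rankU_le [set x] A; rewrite cards1 sub1set; apply. Qed.

Lemma rankU1_closure x A B : x \in E -> A \subset B -> B \subset E ->
  r (x |: A) = r A -> r (x |: B) = r B.
Proof.
move=> xE AB BE rxA; have AE := subset_trans AB BE.
have xAE : x |: A \subset E by rewrite subUset sub1set xE.
have := rank_submod xAE BE; rewrite -setUA (setUidPr AB) rxA.
have := rankS (_ : A \subset (x |: A) :&: B) (subset_trans (subsetIr _ _) BE).
rewrite subsetI subsetUr AB => /(_ isT).
have := rankS (subsetUr [set x] B); rewrite subUset sub1set xE BE => /(_ isT).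
lia.
Qed.

Lemma rank_closure A F : A \subset E -> F \subset E ->
  {in F, forall f, r (f |: A) = r A} -> r (F :|: A) = r A.
Proof.
move=> AE; elim/setU1_ind: F => [|x F _ IH]; first by rewrite set0U.
rewrite subUset sub1set => /andP[xE FE] rF.
rewrite -setUA (rankU1_closure xE (subsetUr F A)) ?subUset ?FE //.
  by apply: IH => // f fF; apply: rF; rewrite !inE fF orbT.
by apply: rF; rewrite !inE eqxx.
Qed.

Definition points N := [set P | is_flat N r P && (r P == 1)].

Lemma epsE N : eps N r = #|points N|.
Proof. by []. Qed.

Lemma pointsP N P : P \in points N ->
  [/\ P \subset N, r P = 1 & forall e, e \in N -> e \notin P -> r P < r (e |: P)].
Proof.
rewrite inE => /andP[/andP[PN /forall_inP flatP] /eqP rP]; split=> // e eN eP.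
by apply: flatP; rewrite inE eN eP.
Qed.

Lemma point_sub N P A : N \subset E -> P \in points N -> A \subset N ->
  r (A :|: P) <= 1 -> A \subset P.
Proof.
move=> NE /pointsP[PN rP flatP] AN rAP; apply/subsetP => e eA.
apply: contraTT rAP => eP; rewrite -ltnNge -rP.
apply: leq_trans (flatP e (subsetP AN e eA) eP) (rankS _ _).
  by rewrite setSU // sub1set.
by rewrite subUset (subset_trans AN NE) (subset_trans PN NE).
Qed.

Lemma point_eq N P Q Z : N \subset E -> P \in points N -> Q \in points N ->
  Z \subset P -> Z \subset Q -> r Z = 1 -> P = Q.
Proof.
move=> NE PN QN ZP ZQ rZ.
have [PsN rP _] := pointsP PN; have [QsN rQ _] := pointsP QN.
have PE := subset_trans PsN NE; have QE := subset_trans QsN NE.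
have := rank_submod PE QE.
have := rankS (_ : Z \subset P :&: Q) (subset_trans (subsetIl _ _) PE).
rewrite subsetI ZP ZQ rZ rP rQ => /(_ isT) rPQ rU.
have rPQ1 : r (P :|: Q) <= 1 by lia.
by apply/eqP; rewrite eqEsubset (point_sub NE QN PsN) ?(point_sub NE PN QsN) // setUC.
Qed.

Lemma point_restrict N W P : N \subset E -> W \subset N -> P \in points N ->
  r (P :&: W) = 1 -> P :&: W \in points W.
Proof.
move=> NE WN PN rPW; have [PsN rP flatP] := pointsP PN.
have PE := subset_trans PsN NE.
rewrite inE /is_flat rPW eqxx subsetIr andbT /=.
apply/forall_inP => e; rewrite !inE negb_and => /andP[/orP[eP|/negP//] eW].
have eN := subsetP WN e eW; have eE := subsetP NE e eN.
have ePWE : e |: (P :&: W) \subset E.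
  by rewrite subUset sub1set eE (subset_trans (subsetIl _ _) PE).
have := rank_submod ePWE PE.
rewrite -setUA (setUidPr (subsetIl _ _)).
have := rankS (_ : P :&: W \subset (e |: (P :&: W)) :&: P)
  (subset_trans (subsetIr _ _) PE).
rewrite subsetI subsetUr subsetIl rPW => /(_ isT).
have := flatP e eN eP; lia.
Qed.

Lemma card_points_le N W (A : {set {set T}}) : N \subset E -> W \subset N ->
  A \subset points N -> {in A, forall P, r (P :&: W) = 1} -> #|A| <= #|points W|.
Proof.
move=> NE WN AN rAW.
have inj : {in A &, injective (fun P => P :&: W)}.
  move=> P Q PA QA eqPW.
  apply: (point_eq NE (subsetP AN _ PA) (subsetP AN _ QA) (subsetIl P W)).
    by rewrite eqPW subsetIl.
  exact: rAW.
rewrite -(card_in_imset inj); apply/subset_leq_card/subsetP => _ /imsetP[P PA ->].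
by apply: (point_restrict NE WN (subsetP AN _ PA)); apply: rAW.
Qed.

Lemma eps_setU_le X Y : X :|: Y \subset E -> eps (X :|: Y) r <= eps X r + eps Y r.
Proof.
move=> XYE; set N := X :|: Y.
rewrite !epsE -(cardsID [set P | r (P :&: X) == 1] (points N)).
apply: leq_add; apply: (card_points_le XYE); rewrite ?subsetUl ?subsetUr
  ?subsetIl ?subsetDl // => P; rewrite !inE => /andP[rPX PN] //; first exact/eqP.
have /pointsP[PsN rP _] : P \in points N by rewrite inE.
have PE := subset_trans PsN XYE.
have := rank_submod (subset_trans (subsetIl P X) PE) (subset_trans (subsetIl P Y) PE).
rewrite -setIUr (setIidPl PsN) rP.
have := rankS (subsetIl P X) PE; have := rankS (subsetIl P Y) PE.
move: rPX; rewrite rP; lia.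
Qed.

Lemma point_has_nonloop N P : N \subset E -> P \in points N ->
  exists2 x, x \in P & r [set x] = 1.
Proof.
move=> NE PN; have [PsN rP _] := pointsP PN; have PE := subset_trans PsN NE.
have [x /andP[xP /eqP rx]|loops] := pickP [pred x | (x \in P) && (r [set x] == 1)].
  by exists x.
suff: r (P :|: set0) = r set0 by rewrite setU0 rank0 rP.
apply: (rank_closure (sub0set E) PE) => f fP; rewrite setU0 rank0.
have /rank_le_card : [set f] \subset E by rewrite sub1set (subsetP PE).
by have := loops f; rewrite /= fP cards1 => /negbT; lia.
Qed.

(* The restriction of the contraction M/C to S is simple: its elements are
   non-loops and pairwise non-parallel in M/C. *)
Definition simple_mod C S :=
  [/\ S \subset E, {in S, forall x, r (x |: C) = r C + 1}
    & {in S &, forall x y, x != y -> r (x |: (y |: C)) = r C + 2}].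

Lemma simple_modS C S L : L \subset S -> simple_mod C S -> simple_mod C L.
Proof.
move=> LS [SE r1 r2]; split; first exact: subset_trans LS SE.
  by move=> x /(subsetP LS); apply: r1.
by move=> x y /(subsetP LS) xS /(subsetP LS); apply: r2.
Qed.

Lemma simple_mod_notin C S x : simple_mod C S -> x \in S -> x \notin C.
Proof.
case=> _ r1 _ xS; apply/negP => xC.
by have := r1 x xS; rewrite (setUidPr _) ?sub1set //; lia.
Qed.

Lemma minor_rank_simple_line C L : C \subset E -> simple_mod C L ->
  r (L :|: C) <= r C + 2 -> forall X, X \subset L -> minor_rank r C X = minn #|X| 2.
Proof.
move=> CE [LE r1 r2] rL X XL; have XE := subset_trans XL LE.
have XCE : X :|: C \subset E by rewrite subUset XE CE.
have /(rankS (setSU C XL)) : L :|: C \subset E by rewrite subUset LE CE.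
have := rankU_le XE CE.
suff : r C + minn #|X| 2 <= r (X :|: C) by rewrite /minor_rank; lia.
have [X2|] := ltnP 1 #|X|.
  have /card_gt1P[x [y [xX yX xy]]] := X2.
  rewrite (minn_idPr X2) -(r2 x y) ?(subsetP XL) //; apply: rankS XCE.
  by rewrite !subUset !sub1set !inE xX yX subsetUr.
rewrite leq_eqVlt ltnS leqn0 cards_eq0 => /orP[/cards1P[x eqX]|/eqP->].
  have xL : x \in L by rewrite (subsetP XL) // eqX set11.
  by rewrite eqX cards1 -(r1 x xL).
by rewrite cards0 set0U addn0.
Qed.

Lemma U2_minor_of_simple_line C L : C \subset E -> simple_mod C L ->
  r (L :|: C) <= r C + 2 -> has_U2_minor #|L| E r.
Proof.
move=> CE simL rL; have [LE _ _] := simL.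
exists C, (E :\: (C :|: L)); split; rewrite ?subsetDl //.
  by rewrite -setI_eq0; apply/eqP/setP => x; rewrite !inE; case: (x \in C).
suff -> : minor_ground E C (E :\: (C :|: L)) = L.
  by split=> //; apply: minor_rank_simple_line.
apply/setP => x; rewrite !inE; have [xL|] := boolP (x \in L).
  by rewrite (subsetP LE) // (negbTE (simple_mod_notin simL xL)).
by case: (x \in C); case: (x \in E).
Qed.

Lemma simple_line_card l C L : ~ has_U2_minor l.+2 E r -> C \subset E ->
  simple_mod C L -> r (L :|: C) <= r C + 2 -> #|L| <= l.+1.
Proof.
move=> noU CE simL rL; rewrite leqNgt; apply/negP => /exists_subset_card[Z ZL cardZ].
have [LE _ _] := simL.
apply: noU; rewrite -cardZ; apply: (U2_minor_of_simple_line CE (simple_modS ZL simL)).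
by apply: leq_trans rL; apply: rankS (setSU C ZL) _; rewrite subUset LE CE.
Qed.

Lemma simple_mod_contract C S e R : C \subset E -> simple_mod C S -> e \in S ->
  R \subset S :\ e ->
  {in R &, forall x y, x != y -> r (x |: (y |: (e |: C))) != r (e |: C) + 1} ->
  simple_mod (e |: C) R.
Proof.
move=> CE [SE r1 r2] eS /subsetP RS nonpar.
have RE x : x \in R -> x \in E by move/RS; rewrite inE => /andP[_ /(subsetP SE)].
have rR x : x \in R -> r (x |: (e |: C)) = r (e |: C) + 1.
  move=> xR; have := RS x xR; rewrite !inE => /andP[xe xS].
  by rewrite (r2 x e xS eS xe) (r1 e eS) -addnA.
split=> [|//|x y xR yR xy]; first exact/subsetP.
have yeCE : y |: (e |: C) \subset E.
  by rewrite !subUset !sub1set RE // (subsetP SE) // CE.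
have := rankU1_le (RE x xR) yeCE; rewrite rR //.
have := rankS (_ : x |: (e |: C) \subset x |: (y |: (e |: C))).
rewrite setUS ?subsetUr // subUset sub1set RE // yeCE rR // => /(_ isT isT).
by move: (nonpar x y xR yR xy) => /eqP; lia.
Qed.

Lemma parallel_class_card l C S e g : ~ has_U2_minor l.+2 E r -> C \subset E ->
  simple_mod C S -> e \in S -> g \in E -> r (g |: (e |: C)) = r (e |: C) + 1 ->
  #|[set f in S :\ e | r (f |: (g |: (e |: C))) == r (e |: C) + 1]| <= l.
Proof.
move=> noU CE simS eS gE rg; set Z := [set f in _ | _].
have [SE r1 _] := simS.
have ZS : Z \subset S :\ e by apply/subsetP => f; rewrite inE => /andP[].
have eZ : e \notin Z by apply/negP => /(subsetP ZS); rewrite !inE eqxx.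
have eZS : e |: Z \subset S by rewrite subUset sub1set eS (subset_trans ZS (subsetDl _ _)).
have geCE : g |: (e |: C) \subset E by rewrite !subUset !sub1set gE (subsetP SE) // CE.
have ZE : Z \subset E := subset_trans (subset_trans ZS (subsetDl _ _)) SE.
have rZ : r (Z :|: (g |: (e |: C))) = r C + 2.
  rewrite (rank_closure geCE ZE) => [|f]; first by rewrite rg r1 // -addnA.
  by rewrite inE => /andP[_ /eqP->]; rewrite rg.
suff : #|e |: Z| <= l.+1 by rewrite cardsU1 eZ.
apply: simple_line_card noU CE (simple_modS eZS simS) _.
rewrite -rZ; apply: rankS; last by rewrite subUset ZE.
by apply/subsetP => x; rewrite !inE => /orP[/orP[]|] ->; rewrite ?orbT.
Qed.

Lemma kung_simple l k C S : ~ has_U2_minor l.+2 E r -> C \subset E ->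
  simple_mod C S -> r (S :|: C) <= r C + k -> #|S| <= geo_sum l k.
Proof.
(* The classes of elements parallel in M/(C+e) to a maximal non-parallel family R
   are lines of M/C through e; there are #|R| of them, with at most l points each
   besides e. *)
move=> noU; elim: k C S => [|k IH] C S CE simS rS; have [SE r1 _] := simS;
  (have [->|[e eS]] := set_0Vmem S; first by rewrite cards0);
  have SCE : S :|: C \subset E by rewrite subUset SE CE.
  by have := rankS (_ : e |: C \subset S :|: C) SCE; rewrite r1 ?setSU ?sub1set //; lia.
set C' := e |: C.
have C'E : C' \subset E by rewrite subUset sub1set (subsetP SE) // CE.
pose par f g := r (f |: (g |: C')) == r C' + 1.
have par_sym : symmetric par by move=> f g; rewrite /par setUCA.
have [R [RS nonpar dom]] := exists_dominating_independent (S :\ e) par_sym.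
have simR : simple_mod C' R := simple_mod_contract CE simS eS RS nonpar.
have [RE rR _] := simR.
have cardR : #|R| <= geo_sum l k.
  apply: IH C'E simR (leq_trans (rankS _ SCE) _).
    rewrite !subUset sub1set inE eS subsetUr (subset_trans RS) //.
    exact: subset_trans (subsetDl _ _) (subsetUl _ _).
  by rewrite [r C'](r1 e eS) -addnA add1n.
pose cls g := [set f in S :\ e | par f g].
have cover : S :\ e \subset \bigcup_(g in R) cls g.
  apply/subsetP => f fS; apply/bigcupP.
  have [fR|[g gR pfg]] := dom f fS; [exists f | exists g] => //; rewrite inE fS //=.
  by rewrite /par setUA setUid rR.
rewrite (cardsD1 e S) eS /= !add1n ltnS.
apply: leq_trans (subset_leq_card cover) (leq_trans (card_bigcup_le _ _) _).
apply: (@leq_trans (\sum_(g in R) l)).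
  apply: leq_sum => g gR.
  exact: parallel_class_card noU CE simS eS (subsetP RE g gR) (rR g gR).
by rewrite sum_nat_const mulnC leq_mul2l cardR orbT.
Qed.

Lemma rank_pair_points N P Q x y : N \subset E -> P \in points N -> Q \in points N ->
  P != Q -> x \in P -> y \in Q -> r [set x] = 1 -> r [set y] = 1 -> r [set x; y] = 2.
Proof.
move=> NE PN QN PQ xP yQ rx ry.
have [PsN rP _] := pointsP PN; have [QsN _ _] := pointsP QN.
have PE := subset_trans PsN NE; have yN := subsetP QsN y yQ.
have xyE : [set x; y] \subset E by rewrite subUset !sub1set (subsetP PE) // (subsetP NE).
have xy_le2 : r [set x; y] <= 2.
  by apply: leq_trans (rank_le_card xyE) _; rewrite cards2; case: (x != y).
apply/eqP; rewrite eqn_leq xy_le2 ltnNge; apply/negP => xy_le1.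
have yP : [set y] \subset P.
  apply: (point_sub NE PN); first by rewrite sub1set.
  have yxy : [set y] \subset [set x; y] by rewrite sub1set !inE eqxx orbT.
  have := rankS (setSU P yxy); rewrite subUset xyE PE => /(_ isT).
  have := rank_submod xyE PE.
  have := rankS (_ : [set x] \subset [set x; y] :&: P) (subset_trans (subsetIr _ _) PE).
  rewrite subsetI !sub1set !inE eqxx xP => /(_ isT).
  lia.
by move/eqP: PQ; apply; apply: (point_eq NE PN QN yP _ ry); rewrite sub1set.
Qed.

Lemma eps_le_geo_sum l N : ~ has_U2_minor l.+2 E r -> N \subset E ->
  eps N r <= geo_sum l (r N).
Proof.
move=> noU NE; rewrite epsE.
have [->|[P0 P0N]] := set_0Vmem (points N); first by rewrite cards0.
have [x0 _ _] := point_has_nonloop NE P0N.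
pose rep P := odflt x0 [pick x in P | r [set x] == 1].
have repP P : P \in points N -> rep P \in P /\ r [set rep P] = 1.
  move=> PN; rewrite /rep; case: pickP => [x /andP[xP /eqP rx] //|none].
  have [x xP rx] := point_has_nonloop NE PN.
  by have := none x; rewrite xP rx eqxx.
have rep_inj : {in points N &, injective rep}.
  move=> P Q PN QN eqPQ; have [xP rx] := repP P PN; have [xQ _] := repP Q QN.
  by apply: (point_eq NE PN QN (_ : [set rep P] \subset P) _ rx); rewrite sub1set // eqPQ.
rewrite -(card_in_imset rep_inj).
have SN : [set rep P | P in points N] \subset N.
  apply/subsetP => _ /imsetP[P PN ->]; have [PsN _ _] := pointsP PN.
  exact: subsetP PsN _ (repP P PN).1.
apply: (kung_simple noU (sub0set E)); last by rewrite setU0 rank0 add0n rankS.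
split; first exact: subset_trans SN NE.
  by move=> _ /imsetP[P PN ->]; rewrite setU0 rank0 (repP P PN).2.
move=> _ _ /imsetP[P PN ->] /imsetP[Q QN ->] PQ.
have [xP rx] := repP P PN; have [yQ ry] := repP Q QN.
rewrite setU0 rank0 (rank_pair_points NE PN QN _ xP yQ rx ry) //.
by apply: contraNneq PQ => ->.
Qed.

Lemma nonroundP N : ~ round N r ->
  exists X Y, [/\ X :|: Y = N, r X < r N & r Y < r N].
Proof. by move/NNPP=> [X [Y [defN _ rX rY]]]; exists X, Y. Qed.

Lemma eps_nonround_le (B : nat -> nat) c N m : {homo B : a b / a <= b} ->
  N \subset E -> ~ round N r -> r N = m.+1 ->
  (forall X, X \subset N -> r X <= m -> eps X r * c <= B (r X)) ->
  eps N r * c <= 2 * B m.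
Proof.
move=> B_mono NE /nonroundP[X [Y [defN rX rY]]] rN epsB; subst N.
rewrite rN !ltnS in rX rY.
apply: leq_trans (leq_mul (eps_setU_le NE) (leqnn c)) _.
rewrite mulnDl mul2n -addnn leq_add //.
  exact: leq_trans (epsB X (subsetUl X Y) rX) (B_mono _ _ rX).
exact: leq_trans (epsB Y (subsetUr X Y) rY) (B_mono _ _ rY).
Qed.

Section DensityBound.
Variables q t : nat.
Hypotheses (q4 : 4 <= q) (noU : ~ has_U2_minor (q ^ 2).+2 E r).
Hypothesis sparse_round : forall N, N \subset E -> round N r -> t <= r N ->
  eps N r * (q - 1) <= q ^ r N - 1.

Lemma eps_density_bound N : N \subset E ->
  eps N r * (q - 1) <= density_bound q t (geo_sum (q ^ 2) (t - 1)) (r N).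
Proof.
have q0 : 0 < q by apply: leq_trans q4.
set K := geo_sum _ _; have [n] := ubnP (r N); elim: n N => // n IH N ltN NE.
have [lt_rN_t|le_t_rN] := ltnP (r N) t.
  apply: leq_trans (leq_mul (eps_le_geo_sum noU NE) (leqnn _)) (leq_trans _ (leq_addl _ _)).
  rewrite leq_mul2r; apply/orP; right.
  apply: leq_trans (geo_sum_mono _ (_ : r N <= t - 1)) _; first lia.
  by rewrite leq_pmull // expn_gt0.
have [roundN|nonroundN] := classic (round N r).
  exact: leq_trans (sparse_round NE roundN le_t_rN) (leq_addr _ _).
case rN: (r N) => [|m].
  by have [? [? [_ + _]]] := nonroundP nonroundN; rewrite rN.
apply: leq_trans (density_bound_double K (_ : 2 <= q) (_ : t - 1 <= m)); [|lia|lia].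
apply: (eps_nonround_le (density_bound_mono t K q0) NE nonroundN rN) => X XN rX.
apply: IH (subset_trans XN NE); lia.
Qed.

End DensityBound.

End Matroid.

Theorem lemma2p5 (T : finType) (E : {set T}) (r : {set T} -> nat)
    (q t : nat) :
  is_matroid E r -> 4 <= q -> 1 <= t ->
  q ^ mrank E r - 1 <= eps E r * (q - 1) ->
  3 * t <= mrank E r ->
  ~ round E r ->
  has_U2_minor (q ^ 2 + 2) E r \/
  exists N : {set T},
    [/\ N \subset E, round N r, t <= mrank N r &
        q ^ mrank N r - 1 < eps N r * (q - 1)].
Proof.
rewrite /mrank => HM q4 t1 dense rank_ge nonround.
have [U2|noU] := classic (has_U2_minor (q ^ 2 + 2) E r); [by left | right].
rewrite addn2 in noU; apply: NNPP => no_dense_round.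
have sparse_round (N : {set T}) : N \subset E -> round N r -> t <= r N ->
    eps N r * (q - 1) <= q ^ r N - 1.
  move=> NE roundN tN; rewrite leqNgt; apply/negP => denseN.
  by apply: no_dense_round; exists N.
case rE: (r E) dense rank_ge => [|m] dense rank_ge; first lia.
have q_gt0 : 0 < q by apply: leq_trans q4.
have := eps_nonround_le HM (density_bound_mono t _ q_gt0) (subxx E) nonround rE
  (fun X XE _ => eps_density_bound HM q4 noU sparse_round XE).
have := density_bound_lt q4 t1 rank_ge.
lia.
Qed.
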